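(* $c(7)=5$, $c(8)=6$, and $c(9)=6$.
   Context: For a prime power $q$, $\mathbb{F}_q$ is the finite field with $q$ elements. The Hamming distance on $\mathbb{F}_q^3$ is $d(u,v)=|\{i: u_i\ne v_i\}|$; $B(u)=\{v : d(u,v)\le 1\}$; the extended ball is $E(u)=\bigcup_{\lambda\in\mathbb{F}_q} B(\lambda u)$. A subset $\mathcal{H}\subseteq \mathbb{F}_q^3$ is a short covering of $\mathbb{F}_q^3$ if $\bigcup_{h\in\mathcal{H}} E(h)=\mathbb{F}_q^3$, and $c(q)$ denotes the minimum cardinality of a short covering of $\mathbb{F}_q^3$. *)

From HB Require Import structures.
From mathcomp Require Import all_boot all_order all_algebra all_field.
Set Implicit Arguments. Unset Strict Implicit. Unset Printing Implicit Defensive.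
Import GRing.Theory.
Local Open Scope ring_scope.

Section ShortCovering.
Variable F : finFieldType.

Definition vec3 := 'rV[F]_3.

Definition hdist (u v : vec3) : nat := #|[set i : 'I_3 | u 0 i != v 0 i]|.

Definition ball1 (u : vec3) : {set vec3} := [set v | (hdist u v <= 1)%N].

Definition ext_ball (u : vec3) : {set vec3} := \bigcup_(l : F) ball1 (l *: u).

Definition short_covering (H : {set vec3}) : bool :=
  \bigcup_(h in H) ext_ball h == [set: vec3].

Definition has_short_covering_of_size (n : nat) : bool :=
  [exists H : {set vec3}, short_covering H && (#|H| == n)].

Lemma exists_short_covering_size : exists n, has_short_covering_of_size n.
Proof.
exists #|[set: vec3]|; apply/existsP; exists [set: vec3]; rewrite eqxx andbT.
rewrite /short_covering eqEsubset subsetT /=; apply/subsetP => v _.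
apply/bigcupP; exists v; first by rewrite inE.
apply/bigcupP; exists 1; first by [].
rewrite inE scale1r /hdist.
suff -> : [set i : 'I_3 | v 0 i != v 0 i] = set0 by rewrite cards0.
by apply/setP => i; rewrite !inE eqxx.
Qed.

Definition c : nat := ex_minn exists_short_covering_size.

End ShortCovering.

From HB Require Import structures.
From mathcomp Require Import all_boot all_order all_algebra all_field.
From mathcomp Require Import cyclic zify.
Set Implicit Arguments. Unset Strict Implicit. Unset Printing Implicit Defensive.
Import GRing.Theory.
Local Open Scope ring_scope.

(* Let q = #|F| and n = q - 1.  A vector v with no zero coordinate lies in E(h) only
   if v_j / v_i = h_j / h_i for some pair i < j, so the three sets R_ij of ratios
   h_j / h_i realised by H cover the torus (F^x)^2: either R_ij = F^x or
   |R_ik| + |R_jk| >= n.  Vectors with one zero coordinate force either a full R_ij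
   or a nonzero vector of H vanishing at that coordinate.  Counting the vectors of H
   by their zero patterns then gives |H| >= min(6, q - 2).
   Conversely, writing every nonzero field element as a power of a generator of F^x
   turns coverings into combinatorial objects on exponents modulo n, and explicit
   coverings of sizes 5, 6, 6 are checked by computation. *)

Lemma sum_card_fiber (T : finType) (rT : eqType) (A : {set T}) (f : T -> rT) zs :
  uniq zs -> (\sum_(z <- zs) #|[set x in A | f x == z]| = #|[set x in A | f x \in zs]|)%N.
Proof.
have cardE P : #|[set x in A | P x]| = (\sum_(x in A) P x)%N.
  rewrite -sum1_card big_mkcond [RHS]big_mkcond; apply: eq_bigr => x _.
  by rewrite inE; case: (x \in A); case: (P x).
move=> uniq_zs; rewrite cardE; under eq_bigr do rewrite cardE.
rewrite exchange_big; apply: eq_bigr => x _.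
rewrite -(count_uniq_mem _ uniq_zs) -sum1_count [RHS]big_mkcond.
by apply: eq_bigr => z _; rewrite eq_sym.
Qed.

Lemma mem_ord3 (i j k p : 'I_3) : uniq [:: i; j; k] -> p \in [:: i; j; k].
Proof.
move=> ijk; have card_ijk : #|[:: i; j; k]| = #|'I_3| by rewrite (card_uniqP ijk) card_ord.
by rewrite (subset_cardP card_ijk (subset_predT _)).
Qed.

Lemma pred_card_finField_gt0 (F : finFieldType) : (0 < #|F|.-1)%N.
Proof. by rewrite -subn1 subn_gt0 finNzRing_gt1. Qed.

Lemma hdist_le1P (F : finFieldType) (u v : vec3 F) :
  reflect (exists m, forall p, p != m -> u 0 p = v 0 p) (hdist u v <= 1)%N.
Proof.
apply: (iffP card_le1_eqP) => [eqD | [m agree] p q].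
  case: (pickP (fun p => u 0 p != v 0 p)) => [m Dm | D0].
    exists m => p pm; apply/eqP; apply: contraNT pm => Dp; apply/eqP.
    by apply: eqD; rewrite inE.
  by exists 0 => p _; apply/eqP/negbFE/D0.
rewrite !inE => Dp Dq.
have in_m r : u 0 r != v 0 r -> r = m by apply: contraNeq => /agree ->.
by rewrite (in_m _ Dp) (in_m _ Dq).
Qed.

Section ShortCoverings.

Variable F : finFieldType.
Local Notation n := #|F|.-1.

Lemma short_coveringP (H : {set vec3 F}) :
  short_covering H <->
  forall v : vec3 F,
    exists2 h, h \in H & exists l (m : 'I_3), forall p, p != m -> l * h 0 p = v 0 p.
Proof.
rewrite /short_covering eqEsubset subsetT /=; split => [/subsetP cov v | cov].
  have /bigcupP [h hH /bigcupP [l _]] := cov v (in_setT v).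
  rewrite inE => /hdist_le1P [m agree]; exists h => //; exists l, m => p pm.
  by rewrite -agree // mxE.
apply/subsetP => v _; have [h hH [l [m agree]]] := cov v.
apply/bigcupP; exists h => //; apply/bigcupP; exists l => //.
by rewrite inE; apply/hdist_le1P; exists m => p pm; rewrite mxE agree.
Qed.

Lemma card_nonzero_le (A : {set F}) : (forall a, a != 0 -> a \in A) -> (n <= #|A|)%N.
Proof.
move=> nzA; rewrite -(cardsC1 0); apply: subset_leq_card.
by apply/subsetP => a; rewrite !inE => /nzA.
Qed.

Definition pair_support (H : {set vec3 F}) (i j : 'I_3) : {set vec3 F} :=
  [set u in H | (u 0 i != 0) && (u 0 j != 0)].
Arguments pair_support H i%_R j%_R.

Definition ratios (H : {set vec3 F}) (i j : 'I_3) : {set F} :=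
  [set u 0 j / u 0 i | u : vec3 F in pair_support H i j].

Lemma card_ratios_le H i j : (#|ratios H i j| <= #|pair_support H i j|)%N.
Proof. exact: leq_imset_card. Qed.

Lemma pair_supportC H i j : pair_support H j i = pair_support H i j.
Proof. by apply/setP => u; rewrite !inE (andbC (u 0 j != 0)). Qed.

Lemma mem_ratios (H : {set vec3 F}) h l (v : vec3 F) i j : h \in H ->
  l * h 0 i = v 0 i -> l * h 0 j = v 0 j -> v 0 i != 0 -> v 0 j != 0 ->
  v 0 j / v 0 i \in ratios H i j.
Proof.
move=> hH <- <-; rewrite !mulf_eq0 !negb_or => /andP [l0 hi] /andP [_ hj].
apply/imsetP; exists h; first by rewrite inE hH hi hj.
by rewrite invfM mulrACA mulfV // mul1r.
Qed.

Definition vec_at (i j : 'I_3) (x y z : F) : vec3 F :=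
  \row_p (if p == i then x else if p == j then y else z).

Lemma vec_atE i j k x y z : uniq [:: i; j; k] ->
  [/\ vec_at i j x y z 0 i = x, vec_at i j x y z 0 j = y & vec_at i j x y z 0 k = z].
Proof.
rewrite /= !inE negb_or => /andP [/andP [ij ik] /andP [jk _]].
by rewrite !mxE eqxx eq_sym (negbTE ij) eqxx eq_sym (negbTE ik) eq_sym (negbTE jk).
Qed.

Definition zero_pattern (u : vec3 F) : bool * bool * bool :=
  (u 0 0 == 0, u 0 1 == 0, u 0 2 == 0).

Definition count_pattern (H : {set vec3 F}) z := #|[set u in H | zero_pattern u == z]|.

Lemma card_by_patterns (H : {set vec3 F}) (Q : pred (bool * bool * bool)) zs :
  uniq zs -> Q =i zs ->
  #|[set u in H | Q (zero_pattern u)]| = (\sum_(z <- zs) count_pattern H z)%N.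
Proof. by move=> uzs Qzs; rewrite sum_card_fiber //; apply: eq_card => u; rewrite !inE -Qzs. Qed.

Lemma count_patterns_gt0 (H : {set vec3 F}) (Q : pred (bool * bool * bool)) zs u :
  uniq zs -> Q =i zs -> u \in H -> Q (zero_pattern u) ->
  (0 < \sum_(z <- zs) count_pattern H z)%N.
Proof.
move=> uzs Qzs uH Qu; rewrite -(card_by_patterns H uzs Qzs) card_gt0.
by apply/set0Pn; exists u; rewrite inE uH.
Qed.

Lemma card_zero_patterns_le (H : {set vec3 F}) :
  (count_pattern H (false, false, false) + count_pattern H (true, false, false)
   + count_pattern H (false, true, false) + count_pattern H (false, false, true)
   + count_pattern H (false, true, true) + count_pattern H (true, false, true)
   + count_pattern H (true, true, false) <= #|H|)%N.
Proof.
pose zs := [:: (false, false, false); (true, false, false); (false, true, false);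
  (false, false, true); (false, true, true); (true, false, true); (true, true, false)].
have := @card_by_patterns H (predC1 (true, true, true)) zs isT.
rewrite /zs !big_cons big_nil addn0 !addnA => <-; last by case=> [[[] []] []].
by rewrite setIdE subset_leq_card ?subsetIl.
Qed.

Lemma card_pair_supports (H : {set vec3 F}) :
  [/\ #|pair_support H 0 1|
        = count_pattern H (false, false, false) + count_pattern H (false, false, true),
      #|pair_support H 0 2|
        = count_pattern H (false, false, false) + count_pattern H (false, true, false)
    & #|pair_support H 1 2|
        = count_pattern H (false, false, false) + count_pattern H (true, false, false)]%N.
Proof.
have card2 Q z1 z2 : z1 != z2 -> Q =i [:: z1; z2] ->
    #|[set u in H | Q (zero_pattern u)]| = (count_pattern H z1 + count_pattern H z2)%N.
  by move=> z12 Qz; rewrite (card_by_patterns H _ Qz) ?big_cons ?big_nil ?addn0 //= inE z12.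
split; [apply: (card2 (fun '(z0, z1, _) => ~~ z0 && ~~ z1))
      | apply: (card2 (fun '(z0, _, z2) => ~~ z0 && ~~ z2))
      | apply: (card2 (fun '(_, z1, z2) => ~~ z1 && ~~ z2))] => // -[[[] []] []] //.
Qed.

Section LowerBound.

Variable H : {set vec3 F}.
Hypothesis cov : short_covering H.

Lemma full_vector_ratio i j k (v : vec3 F) : uniq [:: i; j; k] ->
  v 0 i != 0 -> v 0 j != 0 -> v 0 k != 0 ->
  [|| v 0 j / v 0 i \in ratios H i j, v 0 k / v 0 i \in ratios H i k
    | v 0 k / v 0 j \in ratios H j k].
Proof.
move=> ijk vi vj vk; have [h hH [l [m agree]]] := (short_coveringP H).1 cov v.
have := mem_ord3 m ijk; move: ijk; rewrite /= !inE negb_or.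
case/andP => [/andP [ij ik] /andP [jk _]] /or3P [] /eqP mE; rewrite {m}mE in agree.
- by rewrite (mem_ratios hH (agree j _) (agree k _)) ?orbT // eq_sym.
- by rewrite (mem_ratios hH (agree i _) (agree k _)) ?orbT // eq_sym.
- by rewrite (mem_ratios hH (agree i _) (agree j _)) // eq_sym.
Qed.

Lemma face_vector_ratio i j k (v : vec3 F) : uniq [:: i; j; k] ->
  v 0 k = 0 -> v 0 i != 0 -> v 0 j != 0 ->
  [exists u in H, (u 0 k == 0) && ((u 0 i != 0) || (u 0 j != 0))]
  || (v 0 j / v 0 i \in ratios H i j).
Proof.
move=> ijk vk vi vj; have [h hH [l [m agree]]] := (short_coveringP H).1 cov v.
have face p : p != m -> k != m -> v 0 p != 0 -> (h 0 k == 0) && (h 0 p != 0).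
  move=> pm km; rewrite -(agree p pm) mulf_eq0 negb_or => /andP [l0 ->].
  by have /eqP := agree k km; rewrite vk mulf_eq0 (negbTE l0) andbT.
have := mem_ord3 m ijk; move: ijk; rewrite /= !inE negb_or.
case/andP => [/andP [ij ik] /andP [jk _]] /or3P [] /eqP mE; rewrite {m}mE in agree face.
- have /andP [hk hj] : (h 0 k == 0) && (h 0 j != 0) by apply: face; rewrite // eq_sym.
  by apply/orP; left; apply/existsP; exists h; rewrite hH hk hj orbT.
- have /andP [hk hi] : (h 0 k == 0) && (h 0 i != 0) by apply: face; rewrite // eq_sym.
  by apply/orP; left; apply/existsP; exists h; rewrite hH hk hi.
- by rewrite (mem_ratios hH (agree i _) (agree j _)) ?orbT.
Qed.

Lemma card_pair_supports_ge i j k : uniq [:: i; j; k] ->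
  (n <= #|pair_support H i j|)%N \/
  (n <= #|pair_support H i k| + #|pair_support H j k|)%N.
Proof.
move=> ijk.
case: (boolP [forall a : F, (a != 0) ==> (a \in ratios H i j)]) => [/forallP Rij | ].
  left; apply: leq_trans (card_ratios_le H i j); apply: card_nonzero_le => a a0.
  by have := Rij a; rewrite a0.
move/forallPn => [a]; rewrite negb_imply => /andP [a0 aR]; right.
pose aRjk := [set a * b | b in ratios H j k].
have /leq_trans -> // : (n <= #|ratios H i k :|: aRjk|)%N.
  apply: card_nonzero_le => b b0; have [vi vj vk] := vec_atE 1 a b ijk.
  have := full_vector_ratio (v := vec_at i j 1 a b) ijk.
  rewrite vi vj vk !divr1 (negbTE aR) /= => /(_ (oner_neq0 _) a0 b0) /orP [bR | bR].
    by rewrite inE bR.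
  by rewrite inE; apply/orP; right; apply/imsetP; exists (b / a); rewrite // mulrC divfK.
apply: leq_trans (leq_card_setU _ _) _.
by apply: leq_add; rewrite ?(leq_trans (leq_imset_card _ _)) ?card_ratios_le.
Qed.

Lemma zero_face_or_card_pair_support_ge i j k : uniq [:: i; j; k] ->
  [exists u in H, (u 0 k == 0) && ((u 0 i != 0) || (u 0 j != 0))] \/
  (n <= #|pair_support H i j|)%N.
Proof.
move=> ijk; case: (boolP [exists u in H, _]) => [face | noface]; [by left | right].
apply: leq_trans (card_ratios_le H i j); apply: card_nonzero_le => a a0.
have [vi vj vk] := vec_atE 1 a 0 ijk.
have := face_vector_ratio (v := vec_at i j 1 a 0) ijk.
by rewrite vi vj vk divr1 (negbTE noface) => /(_ erefl (oner_neq0 _) a0).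
Qed.

Lemma zero_face_counts :
  [/\ 0 < count_pattern H (true, false, false) + count_pattern H (true, false, true)
         + count_pattern H (true, true, false) \/ n <= #|pair_support H 1 2|,
      0 < count_pattern H (false, true, false) + count_pattern H (false, true, true)
         + count_pattern H (true, true, false) \/ n <= #|pair_support H 0 2|
    & 0 < count_pattern H (false, false, true) + count_pattern H (false, true, true)
         + count_pattern H (true, false, true) \/ n <= #|pair_support H 0 1|]%N.
Proof.
have face (Q : pred (bool * bool * bool)) z1 z2 z3 (i j k : 'I_3) :
    uniq [:: i; j; k] -> uniq [:: z1; z2; z3] -> Q =i [:: z1; z2; z3] ->
    (forall u : vec3 F,
       (u 0 k == 0) && ((u 0 i != 0) || (u 0 j != 0)) = Q (zero_pattern u)) ->
    (0 < count_pattern H z1 + count_pattern H z2 + count_pattern H z3)%N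
    \/ (n <= #|pair_support H i j|)%N.
  move=> ijk uz Qz QE; case: (zero_face_or_card_pair_support_ge ijk); last by right.
  case/existsP => u /andP [uH]; rewrite QE => Qu; left.
  by have := count_patterns_gt0 uz Qz uH Qu; rewrite !big_cons big_nil addn0 addnA.
split; [apply: (face (fun '(z0, z1, z2) => z0 && (~~ z1 || ~~ z2)))
      | apply: (face (fun '(z0, z1, z2) => z1 && (~~ z0 || ~~ z2)))
      | apply: (face (fun '(z0, z1, z2) => z2 && (~~ z0 || ~~ z1)))] => //.
all: by [exact: isT | case=> [[[] []] []]].
Qed.

Lemma short_covering_card_ge : (minn 6 n.-1 <= #|H|)%N.
Proof.
have [s01 s02 s12] := card_pair_supports H; have [f0 f1 f2] := zero_face_counts.
have := card_zero_patterns_le H.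
have := card_pair_supports_ge (i := 0) (j := 1) (k := 2) isT.
have := card_pair_supports_ge (i := 0) (j := 2) (k := 1) isT.
have := card_pair_supports_ge (i := 1) (j := 2) (k := 0) isT.
rewrite !(pair_supportC H 0) (pair_supportC H 1 2).
lia.
Qed.

End LowerBound.

End ShortCoverings.

(* Exponent vectors: [None] stands for the coordinate 0 and [Some k] for g ^+ k,
   exponents being taken modulo n = #|F| - 1. *)
Definition scale_exp n (l e : option nat) : option nat :=
  if (l, e) is (Some s, Some k) then Some ((s + k) %% n)%N else None.

Definition exps n : seq (option nat) := None :: [seq Some k | k <- iota 0 n].

Definition exp_covers n (t v : seq (option nat)) : bool :=
  has (fun m => has (fun l => all (fun p => (p == m) ||
    (scale_exp n l (nth None t p) == nth None v p)) (iota 0 3)) (exps n)) (iota 0 3).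

Definition exp_covering n (ts : seq (seq (option nat))) : bool :=
  all (fun a => all (fun b => all (fun c => has (exp_covers n ^~ [:: a; b; c]) ts)
    (exps n)) (exps n)) (exps n).

Section ExponentCoverings.

Variables (F : finFieldType) (g : F) (n : nat).
Hypotheses (n_gt0 : (0 < n)%N) (g_order : g ^+ n = 1).
Hypothesis g_gen : forall x : F, x != 0 -> exists k, x = g ^+ k.

Definition pow_or_zero (e : option nat) : F := if e is Some k then g ^+ k else 0.

Definition exp_vec (t : seq (option nat)) : vec3 F := \row_p pow_or_zero (nth None t p).

Lemma expr_mod k : g ^+ (k %% n) = g ^+ k.
Proof. by rewrite {2}(divn_eq k n) exprD mulnC exprM g_order expr1n mul1r. Qed.

Lemma pow_or_zeroM l e : pow_or_zero l * pow_or_zero e = pow_or_zero (scale_exp n l e).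
Proof. by case: l e => [s|] [k|] /=; rewrite ?mul0r ?mulr0 // -exprD expr_mod. Qed.

Lemma pow_or_zero_exps x : exists2 e, e \in exps n & x = pow_or_zero e.
Proof.
have [-> | x0] := eqVneq x 0; first by exists None; rewrite ?inE.
have [k ->] := g_gen x0; exists (Some (k %% n)%N); last by rewrite /= expr_mod.
by rewrite inE /= map_f // mem_iota ltn_mod n_gt0.
Qed.

Lemma exp_covering_short ts : exp_covering n ts -> short_covering [set:: map exp_vec ts].
Proof.
move=> /allP cov; apply/short_coveringP => v.
have [a aE va] := pow_or_zero_exps (v 0 0).
have [b bE vb] := pow_or_zero_exps (v 0 1).
have [c cE vc] := pow_or_zero_exps (v 0 2).
have -> : v = exp_vec [:: a; b; c].
  apply/rowP => p; rewrite mxE; case: p => [[|[|[|//]]] p3] /=;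
    [rewrite -va | rewrite -vb | rewrite -vc]; congr (v _ _); exact: val_inj.
have /allP /(_ _ bE) /allP /(_ _ cE) /hasP [t tT] := cov a aE.
case/hasP => m; rewrite mem_iota => /andP [_ m_lt3] /hasP [l _ /allP agree].
exists (exp_vec t); first by rewrite inE map_f.
exists (pow_or_zero l), (Ordinal m_lt3) => p pm.
have := agree p; rewrite mem_iota leq0n add0n ltn_ord => /(_ isT) /orP [pm' | /eqP agree_p].
  by move: pm; rewrite -val_eqE /= pm'.
by rewrite !mxE pow_or_zeroM agree_p.
Qed.

End ExponentCoverings.

Lemma finField_generator (F : finFieldType) :
  exists g : F, g ^+ #|F|.-1 = 1 /\ forall x, x != 0 -> exists k, x = g ^+ k.
Proof.
have unity (x : F) : x != 0 -> x ^+ #|F|.-1 = 1.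
  move=> x0; apply: (mulfI x0).
  by rewrite -exprS prednK ?expf_card ?mulr1 // ltnW // finNzRing_gt1.
pose units := enum (predC1 (0 : F)).
have units_unity : all #|F|.-1.-unity_root units.
  by apply/allP => x; rewrite mem_enum unity_rootE => /unity ->.
have size_units : (#|F|.-1 <= size units)%N by rewrite -cardE cardC1.
have /hasP [g _ g_prim] :=
  has_prim_root (pred_card_finField_gt0 F) units_unity (enum_uniq _) size_units.
exists g; split; first exact: prim_expr_order g_prim.
by move=> x x0; have [k ->] := prim_rootP g_prim (unity x x0); exists k.
Qed.

Lemma c_le_card (F : finFieldType) (H : {set vec3 F}) : short_covering H -> (c F <= #|H|)%N.
Proof.
move=> covH; rewrite /c; case: ex_minnP => m _; apply.
by apply/existsP; exists H; rewrite covH /=.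
Qed.

Lemma c_ge (F : finFieldType) : (minn 6 #|F|.-2 <= c F)%N.
Proof.
rewrite /c; case: ex_minnP => m /existsP [H /andP [covH /eqP <-]] _.
exact: short_covering_card_ge.
Qed.

Lemma c_le_exp_covering (F : finFieldType) ts : exp_covering #|F|.-1 ts -> (c F <= size ts)%N.
Proof.
have [g [g_order g_gen]] := finField_generator F.
move/(exp_covering_short (pred_card_finField_gt0 F) g_order g_gen)/c_le_card/leq_trans.
by apply; rewrite cardsE (leq_trans (card_size _)) ?size_map.
Qed.

Theorem theorem2 :
  (forall F : finFieldType, #|F| = 7%N -> c F = 5%N) /\
  (forall F : finFieldType, #|F| = 8%N -> c F = 6%N) /\
  (forall F : finFieldType, #|F| = 9%N -> c F = 6%N).
Proof.
have c_eq (F : finFieldType) ts :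
    exp_covering #|F|.-1 ts -> (size ts <= minn 6 #|F|.-2)%N -> c F = size ts.
  move=> covF size_ts; apply/eqP; rewrite eqn_leq c_le_exp_covering //.
  exact: leq_trans size_ts (c_ge F).
split; [|split] => F card_F.
- apply: (c_eq F [:: [:: Some 0; None; None]; [:: None; Some 0; None];
    [:: Some 0; Some 0; Some 0]; [:: Some 0; Some 2; Some 4]; [:: Some 0; Some 4; Some 2]]%N);
    by rewrite card_F; vm_compute.
- apply: (c_eq F [:: [:: Some 0; None; None]; [:: None; Some 0; Some 0];
    [:: Some 0; Some 0; Some 1]; [:: Some 0; Some 1; Some 3]; [:: Some 0; Some 2; Some 0];
    [:: Some 0; Some 3; Some 2]]%N);
    by rewrite card_F; vm_compute.
- apply: (c_eq F [:: [:: Some 0; None; None]; [:: None; Some 0; Some 0];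
    [:: Some 0; Some 0; Some 2]; [:: Some 0; Some 2; Some 6]; [:: Some 0; Some 4; Some 0];
    [:: Some 0; Some 6; Some 4]]%N);
    by rewrite card_F; vm_compute.
Qed.
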